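(* Let $P$ be a probability measure on $(\Omega,\mathcal{M})$, $\tau:\Omega\to[0,\infty]$ measurable, and $Q\in\mathcal{U}^\Lambda(P)$ for some $\Lambda:[0,\infty)\to[0,\infty]$ with $\Lambda(0)=0$ that is finite on a neighborhood of $0$. Then $$\log\Big[\int\tau\,dQ\Big]\le\inf_{c>1}\Big\{\frac1c\log\Big[\int\tau^c\,dP\Big]+\frac{c-1}{c}\Lambda\big(1/(c-1)\big)\Big\},$$ with the convention $-\infty+\infty=\infty$.
   Context: $\tau^c=\exp(c\log\tau)$ with continuous extensions of $\exp,\log$ to extended reals. $\Lambda_Q^f(\lambda)=\log E_Q[e^{\lambda f}]$. $\mathcal{U}^\Lambda(P)=\{Q \text{ probability measure}: Q\ll P,\ \Lambda_Q^{\log(dQ/dP)}(\lambda)\le\Lambda(\lambda)\ \text{for all }\lambda>0\}$. *)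

From HB Require Import structures.
From mathcomp Require Import all_boot all_order all_algebra.
From mathcomp Require Import all_classical all_reals all_analysis.
From mathcomp Require Import measurable_realfun.

(** Write E_Q[tau] = E_P[tau g] with g a version of dQ/dP. Hölder's inequality
    with conjugate exponents c and c' = c/(c-1) gives
      log E_Q[tau] <= (1/c) log E_P[tau^c] + (1/c') log E_P[g^c'],
    and by change of measure E_P[g^c'] = E_Q[g^(c'-1)] = E_Q[exp(l log g)] with
    l = 1/(c-1), whose logarithm is at most Lambda(l) since Q is in U^Lambda(P).
    When E_P[tau^c] or E_P[g^c'] is infinite the right-hand side is +oo thanks
    to the dual addition. *)

From HB Require Import structures.
From mathcomp Require Import all_boot all_order all_algebra.
From mathcomp Require Import all_classical all_reals all_analysis.
From mathcomp Require Import measurable_realfun.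
From mathcomp Require Import ring.

Set Implicit Arguments.
Unset Strict Implicit.
Unset Printing Implicit Defensive.

Import Order.TTheory GRing.Theory Num.Theory DualAddTheory.
Local Open Scope classical_set_scope.
Local Open Scope ring_scope.
Local Open Scope charge_scope.
Local Open Scope ereal_scope.

Section lne_poweR.
Context {R : realType}.
Implicit Types x y : \bar R.

Lemma measurable_lne : measurable_fun [set: \bar R] (@lne R).
Proof.
have -> : @lne R = fun x => if x <= 0 then -oo else if x == +oo then +oo
                            else (ln (fine x))%:E.
  by apply/funext => -[r||] //=; rewrite leNye.
apply: measurable_fun_ifT => //=; first exact: measurable_fun_lee.
apply: measurable_fun_ifT => //=; first exact: measurable_fun_eqe.
by apply/measurable_EFinP; apply: measurableT_comp.
Qed.

Lemma measurable_expeR : measurable_fun [set: \bar R] (@expeR R).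
Proof.
have -> : @expeR R = fun x => if x == +oo then +oo else if x == -oo then 0
                              else (expR (fine x))%:E.
  by apply/funext => -[r||].
apply: measurable_fun_ifT => //=; first exact: measurable_fun_eqe.
apply: measurable_fun_ifT => //=; first exact: measurable_fun_eqe.
by apply/measurable_EFinP; apply: measurableT_comp.
Qed.

Lemma expeR_mul_lne x (r : R) : (0 < r)%R -> 0 <= x ->
  expeR (r%:E * lne x) = x `^ r.
Proof.
move=> r0; case: x => [s||] //= s0.
- have [->|s_neq0] := eqVneq s 0%R.
    by rewrite /= lexx /= gt0_muleNy //= powR0 // gt_eqF.
  have s_gt0 : (0 < s)%R by rewrite lt_def s_neq0 -lee_fin.
  by rewrite /= leNgt s_gt0 /= /powR (negbTE s_neq0) mulrC.
- by rewrite gt0_muley //= gt_eqF // gt_eqF.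
Qed.

Lemma lne_poweR x (r : R) : (0 < r)%R -> 0 <= x -> lne (x `^ r) = r%:E * lne x.
Proof. by move=> r0 x0; rewrite -expeR_mul_lne // expeRK. Qed.

(* No side condition on infinite values: [0 * +oo = 0] and [-oo + +oo = -oo]. *)
Lemma ge0_lneM x y : 0 <= x -> 0 <= y -> lne (x * y) = lne x + lne y.
Proof.
move=> x0 y0.
have [->|x_neq0] := eqVneq x 0; first by rewrite mul0e le0_lneNy.
have [->|y_neq0] := eqVneq y 0.
  by rewrite mule0 (le0_lneNy (lexx 0)) addeNy.
by rewrite lneM // in_itv /= leey andbT lt_def ?x_neq0 ?y_neq0.
Qed.

End lne_poweR.

Lemma adde_le_dadde (R : realType) (x y : \bar R) : x + y <= (x + y)%dE.
Proof. by case: x y => [x| |] [y| |] //=; rewrite ?leey ?leNye. Qed.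

Section integral_poweR_lty.
Context d (T : measurableType d) (R : realType) (mu : {measure set T -> \bar R}).
Variables (f : T -> \bar R) (p : R).
Hypotheses (p_gt0 : (0 < p)%R) (mf : measurable_fun setT f)
           (f_ge0 : forall x, 0 <= f x).

Lemma integral_poweR_lty_ae_fin_num :
  \int[mu]_x f x `^ p < +oo -> {ae mu, forall x, f x \is a fin_num}.
Proof.
move=> fp; have : mu.-integrable setT (fun x => f x `^ p).
  apply/integrableP; split; first exact: measurableT_comp (measurable_poweR _) mf.
  by under eq_integral do rewrite gee0_abs ?poweR_ge0 //.
move/integrable_ae => /(_ measurableT); apply: filterS => x /(_ I).
by move: (f_ge0 x); case: (f x) => // _; rewrite poweRyr // gt_eqF.
Qed.

Lemma Lnorm_fine : \int[mu]_x f x `^ p < +oo ->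
  'N[mu]_p%:E[EFin \o (fine \o f)] = (\int[mu]_x f x `^ p) `^ p^-1.
Proof.
move=> fp; rewrite unlock; congr (_ `^ _).
apply: ae_eq_integral => //.
- apply: measurableT_comp (measurable_poweR _) _.
  by apply: measurableT_comp => //; apply/measurable_EFinP; exact: measurableT_comp.
- exact: measurableT_comp (measurable_poweR _) mf.
- move: (integral_poweR_lty_ae_fin_num fp); apply: filterS => x fx _.
  by rewrite /= ger0_norm ?fine_ge0 // -poweR_EFin fineK.
Qed.

End integral_poweR_lty.

Section hoelder_ge0.
Context d (T : measurableType d) (R : realType) (mu : {measure set T -> \bar R}).
Variables (f g : T -> \bar R) (p q : R).
Hypotheses (mf : measurable_fun setT f) (mg : measurable_fun setT g).
Hypotheses (f_ge0 : forall x, 0 <= f x) (g_ge0 : forall x, 0 <= g x).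
Hypotheses (p_gt0 : (0 < p)%R) (q_gt0 : (0 < q)%R) (pq : (p^-1 + q^-1 = 1)%R).

Lemma hoelder_ge0 :
  \int[mu]_x f x `^ p < +oo -> \int[mu]_x g x `^ q < +oo ->
  \int[mu]_x (f x * g x) <=
    (\int[mu]_x f x `^ p) `^ p^-1 * (\int[mu]_x g x `^ q) `^ q^-1.
Proof.
move=> fp gq.
have mfinef : measurable_fun setT (fine \o f) by exact: measurableT_comp.
have mfineg : measurable_fun setT (fine \o g) by exact: measurableT_comp.
rewrite -(Lnorm_fine p_gt0 mf f_ge0 fp) -(Lnorm_fine q_gt0 mg g_ge0 gq).
have -> : \int[mu]_x (f x * g x) = 'N[mu]_1[EFin \o ((fine \o f) \* (fine \o g))%R].
  rewrite Lnorm1; apply: ae_eq_integral => //.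
  - exact: emeasurable_funM.
  - by apply: measurableT_comp => //; apply/measurable_EFinP; exact: measurable_funM.
  - move: (integral_poweR_lty_ae_fin_num p_gt0 mf f_ge0 fp)
      (integral_poweR_lty_ae_fin_num q_gt0 mg g_ge0 gq).
    apply: filterS2 => x fx gx _.
    by rewrite /= ger0_norm ?mulr_ge0 ?fine_ge0 // EFinM !fineK.
exact: hoelder.
Qed.

Lemma lne_hoelder_ge0 :
  lne (\int[mu]_x (f x * g x)) <=
    (p^-1%:E * lne (\int[mu]_x f x `^ p) + q^-1%:E * lne (\int[mu]_x g x `^ q))%dE.
Proof.
set A := \int[mu]_x f x `^ p; set B := \int[mu]_x g x `^ q.
have A_ge0 : 0 <= A by apply: integral_ge0 => x _; exact: poweR_ge0.
have B_ge0 : 0 <= B by apply: integral_ge0 => x _; exact: poweR_ge0.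
have [->|] := eqVneq A +oo.
  by rewrite [lne _]/= gt0_muley ?lte_fin ?invr_gt0 // daddye leey.
rewrite -ltey => A_lty.
have [->|] := eqVneq B +oo.
  by rewrite [lne +oo]/= gt0_muley ?lte_fin ?invr_gt0 // daddey leey.
rewrite -ltey => B_lty.
apply: le_trans (adde_le_dadde _ _).
rewrite -!lne_poweR ?invr_gt0 // -ge0_lneM ?poweR_ge0 //.
rewrite lee_lne ?in_itv /= ?leey ?andbT ?mule_ge0 ?poweR_ge0 //.
- exact: hoelder_ge0.
- by apply: integral_ge0 => x _; exact: mule_ge0.
Qed.

End hoelder_ge0.

(* [Radon_Nikodym_SigmaFinite.f nu mu] is a nonnegative, finite version of the
   density ['d nu '/d mu], which is only determined up to [mu]-null sets. *)
Section radon_nikodym_moment.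
Context d (T : measurableType d) (R : realType).
Variables (nu : {finite_measure set T -> \bar R})
          (mu : {sigma_finite_measure set T -> \bar R}).
Hypothesis numu : nu `<< mu.
Local Notation g := (Radon_Nikodym_SigmaFinite.f nu mu).

Lemma measurable_Radon_Nikodym_SigmaFinite : measurable_fun setT g.
Proof. exact: measurable_int (Radon_Nikodym_SigmaFinite.f_integrable numu). Qed.

Lemma integral_comp_Radon_Nikodym (phi : \bar R -> \bar R) :
  measurable_fun setT phi ->
  \int[nu]_x phi ('d (charge_of_finite_measure nu) '/d mu x) =
  \int[nu]_x phi (g x).
Proof.
move=> mphi; have mg := measurable_Radon_Nikodym_SigmaFinite.
apply: ae_eq_integral => //; [exact: measurableT_comp..|].
have := null_dominates_ae_eq measurableT numu
  (ae_eq_Radon_Nikodym_SigmaFinite numu measurableT).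
by apply: filterS => x /= gE /gE ->.
Qed.

Lemma integral_poweR_Radon_Nikodym (r : R) : (r + 1 != 0)%R ->
  \int[nu]_x g x `^ r = \int[mu]_x g x `^ (r + 1).
Proof.
move=> r1; have g_ge0 := Radon_Nikodym_SigmaFinite.f_ge0 numu.
rewrite -(Radon_Nikodym_SigmaFinite.change_of_variables numu) //; first last.
- exact: measurableT_comp (measurable_poweR _) measurable_Radon_Nikodym_SigmaFinite.
- by move=> x; exact: poweR_ge0.
apply: eq_integral => x _.
rewrite -[g x]fineK ?Radon_Nikodym_SigmaFinite.f_fin_num //.
by rewrite !poweR_EFin -EFinM powRD ?(negbTE r1) // powRr1 // fine_ge0.
Qed.

End radon_nikodym_moment.

Theorem mainTheorem11 (d : measure_display) (Omega : measurableType d)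
  (R : realType) (P Q : probability Omega R) (tau : Omega -> \bar R)
  (Lambda : R -> \bar R) :
  measurable_fun [set: Omega] tau ->
  (forall x, 0 <= tau x) ->
  Lambda 0%R = 0 ->
  (forall l : R, (0 <= l)%R -> 0 <= Lambda l) ->
  (exists2 e : R, (0 < e)%R & forall l : R, (0 <= l)%R -> (l < e)%R ->
     Lambda l \is a fin_num) ->
  Q `<< P ->
  (forall l : R, (0 < l)%R ->
     lne (\int[Q]_x expeR (l%:E * lne (('d (charge_of_finite_measure Q) '/d P) x)))
       <= Lambda l) ->
  lne (\int[Q]_x tau x) <=
    ereal_inf [set (((c^-1)%R%:E * lne (\int[P]_x expeR (c%:E * lne (tau x))))%E
                    + (((c - 1) / c)%R%:E * Lambda (c - 1)^-1%R)%E)%dE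
              | c in `]1%R, +oo[%classic].
Proof.
move=> mtau tau_ge0 _ _ _ QP QU.
apply: le_ereal_inf_tmp => _ [c /= /[!in_itv] /andP[c_gt1 _] <-].
have c_gt0 : (0 < c)%R by apply: lt_trans c_gt1.
set l := (c - 1)^-1%R.
have l_gt0 : (0 < l)%R by rewrite invr_gt0 subr_gt0.
have lE : ((l + 1)^-1 = (c - 1) / c)%R by rewrite /l; field; rewrite subr_eq0 !gt_eqF.
have cl : (c^-1 + (l + 1)^-1 = 1)%R by rewrite lE; field; rewrite gt_eqF.
set g := Radon_Nikodym_SigmaFinite.f Q P.
have g_ge0 : forall x, 0 <= g x := Radon_Nikodym_SigmaFinite.f_ge0 QP.
have moment : lne (\int[P]_x g x `^ (l + 1)) <= Lambda l.
  have mphi : measurable_fun setT (fun y : \bar R => expeR (l%:E * lne y)).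
    apply: measurableT_comp measurable_expeR _.
    by apply: emeasurable_funM => //; exact: measurable_lne.
  move: (QU l l_gt0); rewrite (integral_comp_Radon_Nikodym QP mphi).
  under eq_integral do rewrite expeR_mul_lne //.
  by rewrite integral_poweR_Radon_Nikodym // gt_eqF // addr_gt0.
rewrite -(Radon_Nikodym_SigmaFinite.change_of_variables QP tau_ge0 measurableT mtau).
have -> : \int[P]_x expeR (c%:E * lne (tau x)) = \int[P]_x tau x `^ c.
  by apply: eq_integral => x _; exact: expeR_mul_lne.
apply: le_trans (lne_hoelder_ge0 P mtau (measurable_Radon_Nikodym_SigmaFinite QP)
  tau_ge0 g_ge0 c_gt0 _ cl) _.
  exact: addr_gt0.
by rewrite lE lee_dD2l // lee_wpmul2l // lee_fin divr_ge0 // ?subr_ge0 ltW.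
Qed.
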